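(* Let $G$ be a finite group and $S\subseteq G\setminus\{e\}$ such that $\mathrm{Cay}(G,S)$ is a weakly distance-regular digraph, and let $\mathcal{D}(G,S)$ be its two-way distance module. Then $\mathcal{D}(G,S)$ is a primitive S-ring if and only if $\mathrm{Cay}(G,S)$ is primitive.
   Context: $\mathrm{Cay}(G,S)$ has vertex set $G$ and arcs $(x,y)$ with $yx^{-1}\in S$. For a digraph $\Gamma$, $\tilde\partial(x,y)=(\partial(x,y),\partial(y,x))$ with $\partial$ the directed distance, $\Gamma_{\tilde i}=\{(x,y):\tilde\partial(x,y)=\tilde i\}$; a strongly connected $\Gamma$ is weakly distance-regular if $(V\Gamma,\{\Gamma_{\tilde i}\})$ is an association scheme. In an association scheme, for relations $R_i,R_j$ let $R_iR_j$ be the set of relations $R_l$ with nonzero intersection number $p_{i,j}^l$; a set $F$ of relations is closed if $R_i^{\mathrm T}R_j\subseteq F$ for all $R_i,R_j\in F$; the scheme is primitive if the smallest closed set containing any non-diagonal relation is the set of all relations; $\Gamma$ is primitive if its scheme is. For $X\subseteq G$, $\underline{X}$ denotes $\sum_{x\in X}x\in\mathbb{Z}[G]$. A subring $\mathcal A\subseteq\mathbb{Z}[G]$ is an S-ring over $G$ if there is a partition $\mathcal S$ of $G$ with $\{e\}\in\mathcal S$, $X^{(-1)}=\{x^{-1}:x\in X\}\in\mathcal S$ for all $X\in\mathcal S$, and $\{\underline X:X\in\mathcal S\}$ a $\mathbb{Z}$-basis of $\mathcal A$; a subgroup $H$ of $G$ is an $\mathcal A$-subgroup if $\underline H\in\mathcal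 A$; $\mathcal A$ is primitive if it has no $\mathcal A$-subgroup other than $\{e\}$ and $G$. With $\Gamma=\mathrm{Cay}(G,S)$ and $N_{\tilde i}=\{y:\tilde\partial(e,y)=\tilde i\}$, the two-way distance module $\mathcal{D}(G,S)$ is the $\mathbb{Z}$-submodule of $\mathbb{Z}[G]$ spanned by the elements $\underline{N_{\tilde i}}$, $\tilde i$ ranging over all two-way distances of $\Gamma$. *)

From mathcomp Require Import all_boot all_order all_algebra all_fingroup.
Set Implicit Arguments. Unset Strict Implicit. Unset Printing Implicit Defensive.
Import GRing.Theory.

Section Defs.
Variable gT : finGroupType.

Definition cay_arc (S : {set gT}) (x y : gT) : bool := ((y * x^-1)%g \in S).

Fixpoint cay_ball (S : {set gT}) (k : nat) (x : gT) : {set gT} :=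
  if k is k'.+1 then
    cay_ball S k' x :|: [set y | [exists z in cay_ball S k' x, cay_arc S z y]]
  else [set x].

Definition strongly_connected (S : {set gT}) : Prop :=
  forall x y : gT, exists k, y \in cay_ball S k x.

(* directed distance d(x,y): least k with y reachable from x in <= k steps
   (every finite distance is < #|gT|; the value #|gT| signals "unreachable",
   which cannot happen under strong connectivity) *)
Definition ddist (S : {set gT}) (x y : gT) : nat :=
  find (fun k => y \in cay_ball S k x) (iota 0 #|gT|).

Definition tdist (S : {set gT}) (x y : gT) : nat * nat := (ddist S x y, ddist S y x).

End Defs.

Section Schemes.
Variable V : finType.

Definition fibres (I : eqType) (c : V -> V -> I) : {set {set V * V}} :=
  [set [set p : V * V | c p.1 p.2 == c q.1 q.2] | q : V * V].

Definition diagR : {set V * V} := [set p : V * V | p.1 == p.2].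
Definition transpR (R : {set V * V}) : {set V * V} := [set p : V * V | (p.2, p.1) \in R].

Definition inter_num (R1 R2 R3 : {set V * V}) : nat :=
  if [pick q in R3] is Some q then
    #|[set z | ((q.1, z) \in R1) && ((z, q.2) \in R2)]|
  else 0.

Definition is_assoc_scheme (Rs : {set {set V * V}}) : Prop :=
  [/\ partition Rs [set: V * V],
      diagR \in Rs,
      (forall R, R \in Rs -> transpR R \in Rs) &
      (forall R1 R2 R3, R1 \in Rs -> R2 \in Rs -> R3 \in Rs ->
        forall x y x' y', (x, y) \in R3 -> (x', y') \in R3 ->
          #|[set z | ((x, z) \in R1) && ((z, y) \in R2)]| =
          #|[set z | ((x', z) \in R1) && ((z, y') \in R2)]|)].

Definition rel_prod (Rs : {set {set V * V}}) (R1 R2 : {set V * V}) : {set {set V * V}} :=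
  [set R in Rs | inter_num R1 R2 R != 0%N].

Definition closed_rels (Rs F : {set {set V * V}}) : Prop :=
  forall R1 R2, R1 \in F -> R2 \in F -> rel_prod Rs (transpR R1) R2 \subset F.

Definition primitive_scheme (Rs : {set {set V * V}}) : Prop :=
  forall R, R \in Rs -> R != diagR ->
    forall F : {set {set V * V}}, F \subset Rs -> closed_rels Rs F -> R \in F -> F = Rs.

End Schemes.

Section Cayley.
Variable gT : finGroupType.

Definition cay_rels (S : {set gT}) : {set {set gT * gT}} := fibres (tdist S).

Definition weakly_distance_regular (S : {set gT}) : Prop :=
  strongly_connected S /\ is_assoc_scheme (cay_rels S).

Definition primitive_digraph (S : {set gT}) : Prop := primitive_scheme (cay_rels S).

Definition zg := {ffun gT -> int}.

Definition ul (X : {set gT}) : zg := [ffun g => if g \in X then 1%R else 0%R].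

Definition zg_mul (a b : zg) : zg :=
  [ffun g => (\sum_(h : gT) a h * b (h^-1 * g)%g)%R].

Definition zspan (P : {set {set gT}}) (a : zg) : Prop :=
  exists l : {set gT} -> int, a = [ffun g => (\sum_(X in P) l X * ul X g)%R].

Definition zbasis (P : {set {set gT}}) (A : zg -> Prop) : Prop :=
  (forall a, A a <-> zspan P a) /\
  (forall l : {set gT} -> int,
     [ffun g => (\sum_(X in P) l X * ul X g)%R] = [ffun _ => 0%R] ->
     forall X, X \in P -> l X = 0%R).

Definition is_Sring (A : zg -> Prop) : Prop :=
  (forall a b, A a -> A b -> A (zg_mul a b)) /\
  exists P : {set {set gT}},
    [/\ partition P [set: gT],
        [set 1%g] \in P,
        (forall X, X \in P -> [set x^-1 | x in X]%g \in P) &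
        zbasis P A].

Definition primitive_Sring (A : zg -> Prop) : Prop :=
  is_Sring A /\
  forall H : {group gT}, A (ul H) -> (H :==: 1)%g || (H :==: [set: gT]).

(* the two-way distance module D(G,S): spanned by ul N_i,
   N_i = {y | ~d(e,y) = i}, i ranging over the two-way distances *)
Definition tw_classes (S : {set gT}) : {set {set gT}} :=
  [set [set y | tdist S 1%g y == tdist S 1%g x] | x : gT].

Definition twd_module (S : {set gT}) : zg -> Prop := zspan (tw_classes S).

End Cayley.

From mathcomp Require Import all_boot all_order all_algebra all_fingroup.
Set Implicit Arguments. Unset Strict Implicit. Unset Printing Implicit Defensive.
Import GRing.Theory.

(* Two-way distances in a Cayley digraph are invariant under right
   translation, so the relations of its scheme are R_g = {(x, y) | c (y x^-1) = c g}
   for the class function c = tdist S 1, whose fibres are the basic sets of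
   D(G, S).  The intersection numbers of this translation scheme are the
   structure constants of the products of basic sets, so D(G, S) is an S-ring.
   Closed sets of relations and D(G, S)-subgroups correspond to each other: a
   closed set F yields the subgroup {g | R_g \in F}, and a subgroup H that is a
   union of fibres yields the closed set of relations contained in
   {(x, y) | y x^-1 \in H}. *)

Section SchemeIntersection.
Variable V : finType.

Lemma inter_num_neq0P (R1 R2 R3 : {set V * V}) : inter_num R1 R2 R3 != 0 ->
  exists x y z, [/\ (x, y) \in R3, (x, z) \in R1 & (z, y) \in R2].
Proof.
rewrite /inter_num; case: pickP => [[x y] xyR3 | _]; last by rewrite eqxx.
by rewrite -lt0n => /card_gt0P[z]; rewrite inE => /andP[xz zy]; exists x, y, z.
Qed.

Lemma inter_num_neq0 (Rs : {set {set V * V}}) R1 R2 R3 x y z :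
  is_assoc_scheme Rs -> R1 \in Rs -> R2 \in Rs -> R3 \in Rs ->
  (x, y) \in R3 -> (x, z) \in R1 -> (z, y) \in R2 -> inter_num R1 R2 R3 != 0.
Proof.
case=> _ _ _ reg R1s R2s R3s xy xz zy; rewrite /inter_num.
case: pickP => [[x' y'] xy' | /(_ (x, y))]; last by rewrite xy.
rewrite -(reg R1 R2 R3 R1s R2s R3s x y) // -lt0n.
by apply/card_gt0P; exists z; rewrite inE xz zy.
Qed.

End SchemeIntersection.

Section GroupRing.
Variable gT : finGroupType.
Local Open Scope group_scope.

Lemma zg_mul_span (P : {set {set gT}}) (l m : {set gT} -> int) g :
  zg_mul [ffun h => (\sum_(X in P) l X * ul X h)%R]
         [ffun h => (\sum_(Y in P) m Y * ul Y h)%R] g =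
  (\sum_(X in P) \sum_(Y in P)
     l X * m Y * #|[set k | (k \in Y) && ((g * k^-1)%g \in X)]|%:R)%R.
Proof.
have inj_gV : injective (fun k : gT => g * k^-1) by move=> k1 k2 /mulgI /invg_inj.
rewrite ffunE (reindex_inj inj_gV) /=.
transitivity (\sum_k \sum_(X in P) \sum_(Y in P)
                l X * m Y * (ul X (g * k^-1)%g * ul Y k))%R.
  apply: eq_bigr => k _; rewrite !ffunE invMg invgK mulgKV mulr_suml.
  by apply: eq_bigr => X _; rewrite mulr_sumr; apply: eq_bigr => Y _; rewrite mulrACA.
rewrite exchange_big; apply: eq_bigr => X _; rewrite exchange_big.
apply: eq_bigr => Y _; rewrite -mulr_sumr; congr (_ * _)%R.
rewrite -sumr_const [RHS]big_mkcond /=; apply: eq_bigr => k _; rewrite !ffunE inE.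
by case: (k \in Y); case: (g * k^-1 \in X); rewrite ?mulr1 ?mulr0.
Qed.

End GroupRing.

Section FibreModule.
Variables (gT : finGroupType) (I : eqType) (c : gT -> I).
Local Open Scope group_scope.

Definition fibre (g : gT) : {set gT} := [set h | c h == c g].

Definition fibre_classes : {set {set gT}} := [set fibre g | g : gT].

Lemma fibre_id g : g \in fibre g.
Proof. by rewrite inE. Qed.

Lemma fibre_eq g h : c g = c h -> fibre g = fibre h.
Proof. by move=> cgh; apply/setP=> k; rewrite !inE cgh. Qed.

Lemma fibre_classes_partition : partition fibre_classes [set: gT].
Proof.
apply/and3P; split.
- apply/eqP/setP=> g; rewrite inE; apply/bigcupP.
  by exists (fibre g); [apply: imset_f | apply: fibre_id].
- apply/trivIsetP=> _ _ /imsetP[g _ ->] /imsetP[h _ ->] neq_gh.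
  apply/pred0P=> k /=; rewrite !inE; apply/negbTE/andP=> [[/eqP cg /eqP ch]].
  by case/eqP: neq_gh; apply: fibre_eq; rewrite -cg -ch.
- by apply/imsetP=> [[g _ g0]]; have := fibre_id g; rewrite -g0 inE.
Qed.

Lemma sum_fibre_classes (l : {set gT} -> int) g :
  (\sum_(X in fibre_classes) l X * ul X g)%R = l (fibre g).
Proof.
rewrite (bigD1 (fibre g)) ?imset_f //= big1 ?addr0.
  by rewrite ffunE fibre_id mulr1.
move=> _ /andP[/imsetP[h _ ->] neq_hg]; rewrite ffunE inE.
case: eqP => [cgh | _]; last by rewrite mulr0.
by case/eqP: neq_hg; apply: fibre_eq.
Qed.

Lemma zspan_fibreP (a : zg gT) :
  zspan fibre_classes a <-> (forall g h, c g = c h -> a g = a h).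
Proof.
split=> [[l ->] g h cgh | a_cst].
  by rewrite !ffunE !sum_fibre_classes (fibre_eq cgh).
exists (fun X => a (repr X)); apply/ffunP=> g; rewrite ffunE sum_fibre_classes.
by have := mem_repr _ (fibre_id g); rewrite inE => /eqP /a_cst.
Qed.

Lemma zspan_fibre_ul (H : {set gT}) :
  zspan fibre_classes (ul H) <-> (forall g h, c g = c h -> g \in H -> h \in H).
Proof.
split=> [/zspan_fibreP H_cst g h cgh | H_cst].
  by have := H_cst g h cgh; rewrite !ffunE; do 2 case: ifP.
apply/zspan_fibreP=> g h cgh; rewrite !ffunE.
case: ifP => gH; case: ifP => hH //.
- by rewrite (H_cst g h cgh gH) in hH.
- by rewrite (H_cst h g (esym cgh) hH) in gH.
Qed.

Definition fibre_count_invariant : Prop :=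
  forall x y g h, c g = c h ->
    #|[set k | (c k == c y) && (c (g * k^-1) == c x)]| =
    #|[set k | (c k == c y) && (c (h * k^-1) == c x)]|.

Lemma zspan_fibre_mul a b : fibre_count_invariant ->
  zspan fibre_classes a -> zspan fibre_classes b ->
  zspan fibre_classes (zg_mul a b).
Proof.
move=> count [l ->] [m ->]; apply/zspan_fibreP=> g h cgh; rewrite !zg_mul_span.
apply: eq_bigr => _ /imsetP[x _ ->]; apply: eq_bigr => _ /imsetP[y _ ->].
have eq_count g' : [set k | (k \in fibre y) && (g' * k^-1 \in fibre x)] =
                   [set k | (c k == c y) && (c (g' * k^-1) == c x)].
  by apply/setP=> k; rewrite !inE.
by rewrite !eq_count (count x y g h cgh).
Qed.

Lemma fibre_classes_Sring :
  (forall g, c g = c 1 -> g = 1) ->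
  (forall g h, c g = c h -> c g^-1 = c h^-1) ->
  fibre_count_invariant -> is_Sring (zspan fibre_classes).
Proof.
move=> c1 cV count; split=> [a b|]; first exact: zspan_fibre_mul.
exists fibre_classes; split.
- exact: fibre_classes_partition.
- have -> : [set 1] = fibre 1 by apply/setP=> g; rewrite !inE; apply/eqP/eqP=> [->|/c1].
  exact: imset_f.
- move=> _ /imsetP[x _ ->]; have -> : [set g^-1 | g in fibre x] = fibre x^-1.
    apply/setP=> g; rewrite -[g]invgK mem_imset; last exact: invg_inj.
    by rewrite !inE; apply/eqP/eqP=> [/cV|/cV]; rewrite !invgK.
  exact: imset_f.
split=> // l l0 _ /imsetP[x _ ->].
by have := congr1 (fun a : zg gT => a x) l0; rewrite !ffunE sum_fibre_classes.
Qed.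

End FibreModule.

Section TranslationScheme.
Variables (gT : finGroupType) (I : eqType) (c : gT -> I).
Local Open Scope group_scope.
Hypothesis c1 : forall g, c g = c 1 -> g = 1.

Definition trel (g : gT) : {set gT * gT} := [set p | c (p.2 * p.1^-1) == c g].

Definition trels : {set {set gT * gT}} := fibres (fun x y : gT => c (y * x^-1)).

Lemma trel1 g : (1, g) \in trel g.
Proof. by rewrite inE /= invg1 mulg1. Qed.

Lemma trel_in g : trel g \in trels.
Proof.
apply/imsetP; exists (1, g) => //.
by apply/setP=> p; rewrite !inE /= invg1 mulg1.
Qed.

Lemma trelsP R : R \in trels -> exists g, R = trel g.
Proof. by case/imsetP=> q _ ->; exists (q.2 * q.1^-1). Qed.

Lemma trel_eq g h : c g = c h -> trel g = trel h.
Proof. by move=> cgh; apply/setP=> p; rewrite !inE cgh. Qed.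

Lemma transpR_trel g : transpR (trel g) = [set p | c (p.1 * p.2^-1) == c g].
Proof. by apply/setP=> p; rewrite !inE. Qed.

Lemma diagR_trel : diagR gT = trel 1.
Proof.
apply/setP=> [[x y]]; rewrite !inE /= -(inj_eq (mulIg x^-1)) mulgV.
by apply/eqP/eqP=> [-> | /c1 ->].
Qed.

Hypothesis scheme : is_assoc_scheme trels.

Lemma scheme_fibre_count : fibre_count_invariant c.
Proof.
case: scheme => _ _ _ reg x y g h cgh.
have := reg _ _ _ (trel_in y) (trel_in x) (trel_in g) 1 g 1 h (trel1 g).
rewrite inE /= invg1 mulg1 cgh eqxx => /(_ isT) count.
have eq_count g' : [set k | (c k == c y) && (c (g' * k^-1) == c x)] =
                   [set z | ((1, z) \in trel y) && ((z, g') \in trel x)].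
  by apply/setP=> k; rewrite !inE /= invg1 mulg1.
by rewrite !eq_count.
Qed.

Lemma scheme_fibreV g h : c g = c h -> c g^-1 = c h^-1.
Proof.
case: scheme => _ _ transp _ cgh.
have [k tg] := trelsP (transp _ (trel_in g)).
have ck u : c u = c g -> c u^-1 = c k.
  move=> cug; have : (1, u^-1) \in transpR (trel g).
    by rewrite transpR_trel inE /= invgK mul1g cug.
  by rewrite tg inE /= invg1 mulg1 => /eqP.
by rewrite (ck g) // (ck h).
Qed.

Lemma closed_trel_mulV (F : {set {set gT * gT}}) a b :
  F \subset trels -> closed_rels trels F ->
  trel a \in F -> trel b \in F -> trel (b * a^-1) \in F.
Proof.
move=> /subsetP sFT closedF Fa Fb; apply: (subsetP (closedF _ _ Fa Fb)).
rewrite inE trel_in /=; apply: (@inter_num_neq0 _ trels _ _ _ 1 _ a^-1) => //.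
- by case: scheme => _ _ transp _; apply/transp/sFT.
- exact: sFT.
- exact: trel_in.
- exact: trel1.
- by rewrite transpR_trel inE /= invgK mul1g.
- by rewrite inE /= invgK mulgKV.
Qed.

Lemma trel_group_set (F : {set {set gT * gT}}) g :
  F \subset trels -> closed_rels trels F -> trel g \in F ->
  group_set [set h | trel h \in F].
Proof.
move=> sFT closedF Fg; have F1 : trel 1 \in F.
  by have := closed_trel_mulV sFT closedF Fg Fg; rewrite mulgV.
apply/group_setP; split=> [|x y]; rewrite !inE // => Fx Fy.
have := closed_trel_mulV sFT closedF Fy F1; rewrite mul1g => FyV.
by have := closed_trel_mulV sFT closedF FyV Fx; rewrite invgK.
Qed.

Lemma primitive_scheme_of_Sring :
  primitive_Sring (zspan (fibre_classes c)) -> primitive_scheme trels.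
Proof.
move=> [_ primA] _ /trelsP[g ->] g_nd F sFT closedF Fg.
pose H := Group (trel_group_set sFT closedF Fg).
have inH h : (h \in H) = (trel h \in F) by rewrite inE.
have H_fibre : zspan (fibre_classes c) (ul H).
  by apply/zspan_fibre_ul=> u v cuv; rewrite !inH (trel_eq cuv).
case/orP: (primA H H_fibre) => [/eqP H1 | /eqP HT].
  have : g \in H by rewrite inH.
  by rewrite H1 inE => /eqP g1; case/eqP: g_nd; rewrite diagR_trel g1.
apply/eqP; rewrite eqEsubset sFT; apply/subsetP=> _ /trelsP[h ->].
by rewrite -inH HT inE.
Qed.

Lemma primitive_Sring_of_scheme :
  primitive_scheme trels -> primitive_Sring (zspan (fibre_classes c)).
Proof.
move=> primT; split.
  exact: fibre_classes_Sring c1 scheme_fibreV scheme_fibre_count.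
move=> H /zspan_fibre_ul H_fibre; case: (boolP (H :==: 1)) => //= /trivgPn[h hH h1].
pose F := [set R in trels | R \subset [set p | p.2 * p.1^-1 \in H]].
have trelF g : g \in H -> trel g \in F.
  move=> gH; rewrite inE trel_in; apply/subsetP=> p; rewrite !inE => /eqP cpg.
  exact: H_fibre (esym cpg) gH.
have closedF : closed_rels trels F.
  move=> R1 R2; rewrite !inE => /andP[_ /subsetP sR1] /andP[_ /subsetP sR2].
  apply/subsetP=> _ /setIdP[/trelsP[g ->] /inter_num_neq0P[x [y [z [xy xz zy]]]]].
  apply: trelF; move: xy; rewrite inE /= => /eqP cyx; apply: (H_fibre _ _ cyx).
  have xzH : x * z^-1 \in H by move: xz; rewrite inE => /sR1; rewrite inE.
  have yzH : y * z^-1 \in H by have := sR2 _ zy; rewrite inE.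
  by have := groupM yzH (groupVr xzH); rewrite invMg invgK mulgA mulgKV.
have h_nd : trel h != diagR gT.
  rewrite diagR_trel; apply/eqP=> th; have := trel1 h.
  by rewrite th inE /= invg1 mulg1 => /eqP /c1 /eqP; rewrite (negbTE h1).
have sFT : F \subset trels by apply/subsetP=> R; rewrite inE => /andP[].
have FT := primT _ (trel_in h) h_nd F sFT closedF (trelF h hH).
rewrite eqEsubset subsetT; apply/subsetP=> g _.
have := trel_in g; rewrite -FT inE => /andP[_ /subsetP /(_ _ (trel1 g))].
by rewrite inE /= invg1 mulg1.
Qed.

Lemma fibre_Sring_primitiveP :
  primitive_Sring (zspan (fibre_classes c)) <-> primitive_scheme trels.
Proof. by split; [apply: primitive_scheme_of_Sring | apply: primitive_Sring_of_scheme]. Qed.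

End TranslationScheme.

Section CayleyDistance.
Variables (gT : finGroupType) (S : {set gT}).
Local Open Scope group_scope.

Lemma cay_ball_mulg k x y h :
  (y * h \in cay_ball S k (x * h)) = (y \in cay_ball S k x).
Proof.
elim: k y => [|k IHk] y /=; first by rewrite !inE (inj_eq (mulIg h)).
rewrite !inE IHk; congr (_ || _).
apply/existsP/existsP=> [[z /andP[zB zy]] | [z /andP[zB zy]]].
  exists (z * h^-1); rewrite -IHk mulgKV zB.
  by move: zy; rewrite /cay_arc invMg invgK mulgA.
exists (z * h); rewrite IHk zB.
by move: zy; rewrite /cay_arc invMg mulgA mulgK.
Qed.

Lemma ddist_mulg x y h : ddist S (x * h) (y * h) = ddist S x y.
Proof. by apply: eq_find => k; rewrite cay_ball_mulg. Qed.

Lemma tdistE x y : tdist S x y = tdist S 1 (y * x^-1).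
Proof. by rewrite -[in RHS](mulgV x) /tdist !ddist_mulg. Qed.

Lemma ddist_eq0 x y : (ddist S x y == 0%N) = (x == y).
Proof.
rewrite /ddist; have : (0 < #|gT|)%N by apply/card_gt0P; exists 1.
by case: #|gT| => //= n _; rewrite inE [x == y]eq_sym; case: (y == x).
Qed.

Lemma tdist_eq1 g : tdist S 1 g = tdist S 1 1 -> g = 1.
Proof.
by case=> d1g _; apply/esym/eqP; rewrite -ddist_eq0 d1g ddist_eq0.
Qed.

Lemma cay_rels_trels : cay_rels S = trels (tdist S 1).
Proof.
by apply: eq_imset=> q; apply/setP=> p; rewrite !inE (tdistE p.1) (tdistE q.1).
Qed.

End CayleyDistance.

Theorem proposition4p3 (gT : finGroupType) (S : {set gT}) :
  (1%g \notin S) ->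
  weakly_distance_regular S ->
  (primitive_Sring (twd_module S) <-> primitive_digraph S).
Proof.
move=> _ [_ scheme]; rewrite /primitive_digraph cay_rels_trels in scheme *.
exact: fibre_Sring_primitiveP (@tdist_eq1 _ S) scheme.
Qed.
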